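(* Let $F(z)=\sum_{k=0}^\infty b_k z^k\in\mathcal{B}$ and let $n\ge 1$ be an integer. Then \[ \sum_{k=n+1}^{\infty}k^2|b_k|^2r^{2k-2}\le \frac{(n+2)^{n+2}}{4n^n}\,r^{2n},\qquad 0\le r\le \sqrt{\frac{n}{n+2}}. \] Moreover, equality holds for the function $F_n\in\mathcal{B}$ with $F_n(0)=0$ and $F_n'(z)=\frac{n+2}{2}\left(\frac{n+2}{n}\right)^{n/2}z^n$.
   Context: $\mathbb{D}$ denotes the open unit disc. $\mathcal{B}$ is the class of functions $F$ analytic in $\mathbb{D}$ satisfying $|F'(z)|\le \frac{1}{1-|z|^2}$ for all $z\in\mathbb{D}$. For $F\in\mathcal{B}$ we write its Taylor expansion as $F(z)=\sum_{k=0}^\infty b_k z^k$. *)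

From Stdlib Require Import Reals Lra.
Open Scope R_scope.

Definition Cx : Type := (R * R)%type.
Definition RtoC (x : R) : Cx := (x, 0).
Definition Cplus (z w : Cx) : Cx := (fst z + fst w, snd z + snd w).
Definition Copp (z : Cx) : Cx := (- fst z, - snd z).
Definition Cminus (z w : Cx) : Cx := Cplus z (Copp w).
Definition Cmult (z w : Cx) : Cx :=
  (fst z * fst w - snd z * snd w, fst z * snd w + snd z * fst w).
Definition Cmod (z : Cx) : R := sqrt (fst z ^ 2 + snd z ^ 2).
Fixpoint Cpow (z : Cx) (n : nat) : Cx :=
  match n with O => RtoC 1 | S m => Cmult z (Cpow z m) end.

Definition in_disc (z : Cx) : Prop := Cmod z < 1.

Definition has_Cderiv (F : Cx -> Cx) (z d : Cx) : Prop :=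
  forall eps : R, 0 < eps -> exists delta : R, 0 < delta /\
    forall h : Cx, 0 < Cmod h < delta ->
      Cmod (Cminus (Cminus (F (Cplus z h)) (F z)) (Cmult d h)) <= eps * Cmod h.

Definition Ccv (u : nat -> Cx) (l : Cx) : Prop :=
  forall eps : R, 0 < eps -> exists N : nat, forall m : nat, (N <= m)%nat ->
    Cmod (Cminus (u m) l) < eps.

Fixpoint Cpsum (b : nat -> Cx) (z : Cx) (N : nat) : Cx :=
  match N with
  | O => Cmult (b O) (Cpow z O)
  | S M => Cplus (Cpsum b z M) (Cmult (b (S M)) (Cpow z (S M)))
  end.

Definition taylor_on_disc (F : Cx -> Cx) (b : nat -> Cx) : Prop :=
  forall z : Cx, in_disc z -> Ccv (Cpsum b z) (F z).

Definition in_Bloch_B (F : Cx -> Cx) : Prop :=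
  exists F' : Cx -> Cx, forall z : Cx, in_disc z ->
    has_Cderiv F z (F' z) /\ Cmod (F' z) <= 1 / (1 - Cmod z ^ 2).

Definition tail_sum (b : nat -> Cx) (n : nat) (r : R) (m : nat) : R :=
  sum_f_R0 (fun j => let k := (n + 1 + j)%nat in
              INR k ^ 2 * Cmod (b k) ^ 2 * r ^ (2 * k - 2)) m.

Definition sharp_bound (n : nat) (r : R) : R :=
  INR (n + 2) ^ (n + 2) / (4 * INR n ^ n) * r ^ (2 * n).

Definition cst (n : nat) : R :=
  INR (n + 2) / 2 * Rpower (INR (n + 2) / INR n) (INR n / 2).

From Stdlib Require Import Reals Lra Lia Psatz.
From Coquelicot Require Import Coquelicot.
From Pilot Require Import Defs.
Open Scope R_scope.

(* Termwise differentiation gives [F'(z) = sum (k+1) b_(k+1) z^k] in the disc, and the discrete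
   Parseval identity at the roots of unity turns [|F'| <= 1 / (1 - rho^2)] on the circle
   [|z| = rho] into Cauchy's mean-square inequality
   [sum k^2 |b_k|^2 rho^(2k-2) <= (1 - rho^2)^(-2)].  For [r <= rho] every tail term with
   [k > n] is at most [(r / rho)^(2n)] times the corresponding term at [rho], and
   [rho^2 = n / (n + 2)] gives the bound.  The extremal function [c z^(n+1) / (n+1)] lies in the
   class by weighted AM-GM, and by uniqueness of Taylor coefficients its tail is the single
   term [k = n + 1], which equals the bound. *)

(* [Defs] re-implements the complex operations on [R * R]; they are convertible to Coquelicot's,
   and the rules below translate to the latter. *)
Local Notation cmod := Complex.Cmod.

Lemma Cminus_C z w : Cminus z w = (z - w)%C. Proof. reflexivity. Qed.
Lemma Cmult_C z w : Cmult z w = (z * w)%C. Proof. reflexivity. Qed.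
Lemma Cmod_C z : Cmod z = cmod z. Proof. reflexivity. Qed.
Lemma RtoC_C x : RtoC x = Complex.RtoC x. Proof. reflexivity. Qed.
Lemma Cpow_C z k : Cpow z k = (z ^ k)%C.
Proof. induction k as [|k IH]; [reflexivity|]. simpl. now rewrite IH. Qed.
Lemma has_Cderiv_C F z d : has_Cderiv F z d <->
  forall eps, 0 < eps -> exists delta, 0 < delta /\
    forall h, 0 < cmod h < delta -> cmod (F (z + h) - F z - d * h)%C <= eps * cmod h.
Proof. reflexivity. Qed.

Lemma C_ext (x y : C) : fst x = fst y -> snd x = snd y -> x = y.
Proof. destruct x, y; simpl; intros -> ->; reflexivity. Qed.

Lemma Cminus_diag (x : C) : (x - x)%C = Complex.RtoC 0.
Proof. ring. Qed.

Lemma Cmod_minus_le (x y : C) : cmod (x - y)%C <= cmod x + cmod y.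
Proof. rewrite <- (Cmod_opp y). apply Cmod_triangle. Qed.

Lemma Cpow_RtoC (x : R) k : (Complex.RtoC x ^ k)%C = Complex.RtoC (x ^ k).
Proof. induction k as [|k IH]; simpl; [reflexivity|]. now rewrite IH, RtoC_mult. Qed.

Lemma Cmod_mult_Cpow_pos (c : C) s k : 0 <= s -> cmod (c * Complex.RtoC s ^ k)%C = cmod c * s ^ k.
Proof.
  intros Hs. rewrite Cpow_RtoC, Cmod_mult, Cmod_R, Rabs_pos_eq; [reflexivity|].
  now apply pow_le.
Qed.

Lemma Cconj_RtoC (x : R) : Cconj (Complex.RtoC x) = Complex.RtoC x.
Proof. apply C_ext; simpl; ring. Qed.

Fixpoint csum (f : nat -> C) (N : nat) : C :=
  match N with O => f O | S M => (csum f M + f (S M))%C end.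

Lemma csum_S f N : csum f (S N) = (csum f N + f (S N))%C.
Proof. reflexivity. Qed.

Lemma csum_ext (f g : nat -> C) N :
  (forall k, (k <= N)%nat -> f k = g k) -> csum f N = csum g N.
Proof.
  induction N as [|N IH]; intros H; simpl; [apply H; lia|].
  rewrite IH by (intros; apply H; lia). now rewrite H by lia.
Qed.

Lemma csum_plus f g N : csum (fun k => f k + g k)%C N = (csum f N + csum g N)%C.
Proof. induction N as [|N IH]; simpl; [|rewrite IH]; ring. Qed.

Lemma csum_minus f g N : csum (fun k => f k - g k)%C N = (csum f N - csum g N)%C.
Proof. induction N as [|N IH]; simpl; [|rewrite IH]; ring. Qed.

Lemma csum_mult_l c f N : csum (fun k => c * f k)%C N = (c * csum f N)%C.
Proof. induction N as [|N IH]; simpl; [|rewrite IH]; ring. Qed.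

Lemma csum_shift f N : csum f (S N) = (f O + csum (fun j => f (S j)) N)%C.
Proof.
  induction N as [|N IH]; [reflexivity|].
  change (csum f (S (S N))) with (csum f (S N) + f (S (S N)))%C.
  rewrite IH. simpl. ring.
Qed.

Lemma Cmod_csum_le f N : cmod (csum f N) <= sum_f_R0 (fun k => cmod (f k)) N.
Proof.
  induction N as [|N IH]; simpl; [lra|].
  eapply Rle_trans; [apply Cmod_triangle|]. lra.
Qed.

Lemma Cpsum_csum b z N : Cpsum b z N = csum (fun k => b k * z ^ k)%C N.
Proof.
  induction N as [|N IH]; [reflexivity|].
  simpl. now rewrite IH, Cpow_C.
Qed.

Lemma Ccv_Cpsum_C a z G : Ccv (Cpsum a z) G <->
  forall eps, 0 < eps -> exists N, forall m, (N <= m)%nat ->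
    cmod (csum (fun k => a k * z ^ k) m - G)%C < eps.
Proof.
  unfold Ccv. setoid_rewrite Cpsum_csum. reflexivity.
Qed.

Lemma sum_f_R0_le_mono f N M :
  (forall k, 0 <= f k) -> (N <= M)%nat -> sum_f_R0 f N <= sum_f_R0 f M.
Proof. intros Hf HNM. induction HNM; simpl; [lra|]. specialize (Hf (S m)). lra. Qed.

Lemma sum_f_R0_term_le f N k : (forall k, 0 <= f k) -> (k <= N)%nat -> f k <= sum_f_R0 f N.
Proof.
  intros Hf Hk. apply Rle_trans with (sum_f_R0 f k).
  - destruct k; simpl; [lra|]. pose proof (cond_pos_sum f k Hf). lra.
  - now apply sum_f_R0_le_mono.
Qed.

Lemma sum_f_R0_shift_le (g : nat -> R) n m : (forall k, 0 <= g k) ->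
  sum_f_R0 (fun i => g (n + i)%nat) m <= sum_f_R0 g (n + m).
Proof.
  intros Hg. induction m as [|m IH].
  - change (g (n + 0)%nat <= sum_f_R0 g (n + 0)). apply sum_f_R0_term_le; [exact Hg | lia].
  - rewrite Nat.add_succ_r, !tech5. cbv beta. rewrite Nat.add_succ_r. lra.
Qed.

Lemma sum_f_R0_eq_first (f : nat -> R) m : (forall i, f (S i) = 0) -> sum_f_R0 f m = f O.
Proof. intros Hf. induction m as [|m IH]; simpl; [|rewrite IH, Hf]; ring. Qed.

Lemma geom_sum_le l N : 0 <= l < 1 -> sum_f_R0 (fun k => l ^ k) N <= 1 / (1 - l).
Proof.
  intros Hl. pose proof (GP_finite l N) as HGP.
  assert (0 <= l ^ (N + 1)) by (apply pow_le; lra).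
  apply Rmult_le_reg_r with (1 - l); [lra|].
  replace (1 / (1 - l) * (1 - l)) with 1 by (field; lra). nra.
Qed.

Lemma INR_S_pow_le l k : 0 <= l < 1 -> INR (S k) * l ^ k <= 1 / (1 - l).
Proof.
  intros Hl. rewrite Rmult_comm, <- sum_cte.
  eapply Rle_trans; [|apply (geom_sum_le l k Hl)].
  apply sum_Rle. intros i Hi.
  replace k with (i + (k - i))%nat at 1 by lia. rewrite pow_add.
  assert (l ^ (k - i) <= 1) by (rewrite <- (pow1 (k - i)); apply pow_incr; lra).
  assert (0 <= l ^ i) by (apply pow_le; lra). nra.
Qed.

(* With [l = (1 + q) / 2]: [(k+1)^2 q^k = ((k+1) l^k)^2 (q / l^2)^k] and [q < l^2]. *)
Lemma sq_pow_le_geom q : 0 <= q < 1 ->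
  exists K mu, 0 <= K /\ 0 <= mu < 1 /\ forall k, INR (S k) ^ 2 * q ^ k <= K * mu ^ k.
Proof.
  intros Hq. set (l := (1 + q) / 2).
  assert (Hl : 1 / 2 <= l < 1) by (unfold l; lra).
  exists ((1 / (1 - l)) ^ 2), (q / l ^ 2).
  split; [apply pow2_ge_0|]. split.
  { split; [apply Rdiv_le_0_compat; [lra | nra]|].
    apply Rmult_lt_reg_r with (l ^ 2); [nra|].
    unfold Rdiv. rewrite Rmult_assoc, Rinv_l by nra. unfold l. nra. }
  intros k. assert (Hk := INR_S_pow_le l k ltac:(lra)).
  replace (INR (S k) ^ 2 * q ^ k) with ((INR (S k) * l ^ k) ^ 2 * (q / l ^ 2) ^ k).
  2:{ rewrite Rpow_mult_distr, <- pow_mult, Nat.mul_comm, pow_mult, Rmult_assoc,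
        <- Rpow_mult_distr.
      do 2 f_equal. field. lra. }
  apply Rmult_le_compat_r; [apply pow_le, Rdiv_le_0_compat; nra|].
  apply pow_incr. split; [|exact Hk].
  apply Rmult_le_pos; [apply pos_INR | apply pow_le; lra].
Qed.

(** * Coefficients of a power series converging in the disc *)

Lemma csum_terms_bounded (f : nat -> C) (l : C) :
  (forall eps, 0 < eps -> exists N, forall m, (N <= m)%nat -> cmod (csum f m - l) < eps) ->
  exists A, 0 <= A /\ forall k, cmod (f k) <= A.
Proof.
  intros Hcv. destruct (Hcv 1 Rlt_0_1) as [N HN].
  set (g k := cmod (f k)).
  assert (Hg : forall k, 0 <= g k) by (intros; apply Cmod_ge_0).
  assert (HS := cond_pos_sum g N Hg).
  exists (2 + sum_f_R0 g N). split; [lra|]. intros k. fold (g k).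
  destruct (Compare_dec.le_lt_dec k N) as [Hk | Hk].
  - pose proof (sum_f_R0_term_le g N k Hg Hk). lra.
  - destruct k as [|j]; [lia|].
    assert (Hj := HN j ltac:(lia)). assert (HSj := HN (S j) ltac:(lia)).
    change (g (S j)) with (cmod (f (S j))).
    replace (f (S j)) with ((csum f (S j) - l) - (csum f j - l))%C by (rewrite csum_S; ring).
    eapply Rle_trans; [apply Cmod_triangle|]. rewrite Cmod_opp. lra.
Qed.

Lemma taylor_coef_bounded F b s : taylor_on_disc F b -> 0 <= s < 1 ->
  exists A, 0 <= A /\ forall k, cmod (b k) * s ^ k <= A.
Proof.
  intros HT Hs.
  assert (Hdisc : in_disc (RtoC s)).
  { unfold in_disc. rewrite Cmod_C, RtoC_C, Cmod_R, Rabs_pos_eq; lra. }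
  destruct (csum_terms_bounded (fun k => b k * Complex.RtoC s ^ k)%C (F (RtoC s)))
    as [A [HA0 HA]].
  { intros eps Heps. destruct (HT _ Hdisc eps Heps) as [N HN].
    exists N. intros m Hm. specialize (HN m Hm).
    now rewrite Cmod_C, Cminus_C, Cpsum_csum in HN. }
  exists A. split; [exact HA0|]. intros k.
  rewrite <- Cmod_mult_Cpow_pos by lra. apply HA.
Qed.

(* Compare with the bound at [s = (1 + rho) / 2]. *)
Lemma taylor_coef_geometric F b rho : taylor_on_disc F b -> 0 <= rho < 1 ->
  exists K mu, 0 <= K /\ 0 <= mu < 1 /\
    forall k, INR (S k) ^ 2 * cmod (b k) * rho ^ k <= K * mu ^ k.
Proof.
  intros HT Hrho. set (s := (1 + rho) / 2).
  destruct (taylor_coef_bounded F b s HT ltac:(unfold s; lra)) as [A [HA0 HA]].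
  destruct (sq_pow_le_geom (rho / s)) as [K [mu [HK [Hmu Hgeom]]]].
  { unfold s. split; [apply Rdiv_le_0_compat; lra|].
    apply Rmult_lt_reg_r with ((1 + rho) / 2); [lra|]. field_simplify; lra. }
  exists (A * K), mu. split; [now apply Rmult_le_pos|]. split; [exact Hmu|]. intros k.
  replace (INR (S k) ^ 2 * cmod (b k) * rho ^ k)
    with ((cmod (b k) * s ^ k) * (INR (S k) ^ 2 * (rho / s) ^ k)).
  2:{ unfold Rdiv. rewrite Rpow_mult_distr, pow_inv. field. apply pow_nonzero. unfold s; lra. }
  rewrite (Rmult_assoc A). apply Rmult_le_compat; auto.
  - apply Rmult_le_pos; [apply Cmod_ge_0 | apply pow_le; unfold s; lra].
  - apply Rmult_le_pos; [apply pow2_ge_0 | apply pow_le, Rdiv_le_0_compat; unfold s; lra].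
Qed.

Lemma taylor_on_disc_csum F b z : taylor_on_disc F b -> cmod z < 1 ->
  forall eps, 0 < eps -> exists N, forall m, (N <= m)%nat ->
    cmod (csum (fun k => b k * z ^ k) m - F z)%C < eps.
Proof. intros HT Hz. apply Ccv_Cpsum_C, HT. exact Hz. Qed.

Lemma taylor_weighted_sum_bounded F b rho : taylor_on_disc F b -> 0 <= rho < 1 ->
  exists B, 0 < B /\ forall N, sum_f_R0 (fun k => INR k ^ 2 * cmod (b k) * rho ^ k) N <= B.
Proof.
  intros HT Hrho. destruct (taylor_coef_geometric F b rho HT Hrho) as [K [mu [HK [Hmu Hgeom]]]].
  exists (K * (1 / (1 - mu)) + 1). split.
  { assert (0 <= K * (1 / (1 - mu))) by (apply Rmult_le_pos; [lra | apply Rdiv_le_0_compat; lra]).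
    lra. }
  intros N. apply Rle_trans with (K * sum_f_R0 (fun k => mu ^ k) N).
  - rewrite scal_sum. apply sum_Rle. intros k _. rewrite (Rmult_comm (mu ^ k)).
    eapply Rle_trans; [|apply Hgeom].
    apply Rmult_le_compat_r; [apply pow_le; lra|].
    apply Rmult_le_compat_r; [apply Cmod_ge_0|].
    apply pow_incr. split; [apply pos_INR | apply le_INR; lia].
  - assert (K * sum_f_R0 (fun k => mu ^ k) N <= K * (1 / (1 - mu)))
      by (apply Rmult_le_compat_l; [exact HK | apply geom_sum_le, Hmu]).
    lra.
Qed.

Lemma taylor_on_disc_sub F G b c : taylor_on_disc F b -> taylor_on_disc G c ->
  taylor_on_disc (fun z => F z - G z)%C (fun k => b k - c k)%C.
Proof.
  intros HF HG z Hz. apply Ccv_Cpsum_C. intros eps Heps.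
  destruct (taylor_on_disc_csum F b z HF Hz (eps / 2)) as [N1 H1]; [lra|].
  destruct (taylor_on_disc_csum G c z HG Hz (eps / 2)) as [N2 H2]; [lra|].
  exists (Nat.max N1 N2). intros m Hm.
  replace (csum (fun k => (b k - c k) * z ^ k) m - (F z - G z))%C
    with ((csum (fun k => b k * z ^ k) m - F z) - (csum (fun k => c k * z ^ k) m - G z))%C.
  2:{ rewrite (csum_ext (fun k => (b k - c k) * z ^ k)%C (fun k => b k * z ^ k - c k * z ^ k)%C)
        by (intros; ring).
      rewrite csum_minus. ring. }
  eapply Rle_lt_trans; [apply Cmod_minus_le|].
  specialize (H1 m ltac:(lia)). specialize (H2 m ltac:(lia)). lra.
Qed.

Lemma csum_tail_le (a : nat -> C) z rho K mu N M : 0 <= mu < 1 -> cmod z <= rho ->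
  (forall j, cmod (a j) * rho ^ j <= K * mu ^ j) -> (N <= M)%nat ->
  cmod (csum (fun j => a j * z ^ j) M - csum (fun j => a j * z ^ j) N)%C
    <= K * (mu ^ S N - mu ^ S M) / (1 - mu).
Proof.
  intros Hmu Hz Hgeom HNM. induction HNM as [|M HNM IH].
  { replace (K * (mu ^ S N - mu ^ S N) / (1 - mu)) with 0 by (field; lra).
    rewrite Cminus_diag, Cmod_0. lra. }
  rewrite csum_S.
  replace (csum (fun j => a j * z ^ j) M + a (S M) * z ^ S M - csum (fun j => a j * z ^ j) N)%C
    with ((csum (fun j => a j * z ^ j) M - csum (fun j => a j * z ^ j) N) + a (S M) * z ^ S M)%C
    by ring.
  eapply Rle_trans; [apply Cmod_triangle|].
  assert (Hterm : cmod (a (S M) * z ^ S M)%C <= K * mu ^ S M).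
  { rewrite Cmod_mult, Cmod_pow. eapply Rle_trans; [|apply Hgeom].
    apply Rmult_le_compat_l; [apply Cmod_ge_0|].
    apply pow_incr. split; [apply Cmod_ge_0 | exact Hz]. }
  replace (K * (mu ^ S N - mu ^ S (S M)) / (1 - mu))
    with (K * (mu ^ S N - mu ^ S M) / (1 - mu) + K * mu ^ S M) by (simpl; field; lra).
  lra.
Qed.

Lemma Ccv_tail_le a z G rho K mu N : 0 <= K -> 0 <= mu < 1 -> cmod z <= rho ->
  (forall j, cmod (a j) * rho ^ j <= K * mu ^ j) -> Ccv (Cpsum a z) G ->
  cmod (G - csum (fun j => a j * z ^ j) N)%C <= K * mu ^ S N / (1 - mu).
Proof.
  intros HK Hmu Hz Hgeom Hcv. apply Rle_plus_epsilon. intros e He.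
  destruct (proj1 (Ccv_Cpsum_C a z G) Hcv e He) as [M0 HM0].
  set (M := Nat.max M0 N). specialize (HM0 M ltac:(lia)).
  assert (Htail := csum_tail_le a z rho K mu N M Hmu Hz Hgeom ltac:(lia)).
  replace (G - csum (fun j => a j * z ^ j) N)%C
    with (- (csum (fun j => a j * z ^ j) M - G)
          + (csum (fun j => a j * z ^ j) M - csum (fun j => a j * z ^ j) N))%C by ring.
  eapply Rle_trans; [apply Cmod_triangle|]. rewrite Cmod_opp.
  assert (K * (mu ^ S N - mu ^ S M) / (1 - mu) <= K * mu ^ S N / (1 - mu)).
  { apply Rmult_le_compat_r; [apply Rlt_le, Rinv_0_lt_compat; lra|].
    assert (0 <= mu ^ S M) by (apply pow_le; lra). nra. }
  lra.
Qed.

Lemma geom_tail_small K mu e : 0 <= K -> 0 <= mu < 1 -> 0 < e ->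
  exists N0, forall N, (N0 <= N)%nat -> K * mu ^ S N / (1 - mu) <= e.
Proof.
  intros HK Hmu He.
  destruct (pow_lt_1_zero mu ltac:(rewrite Rabs_pos_eq; lra) (e * (1 - mu) / (K + 1)))
    as [N0 HN0]; [apply Rdiv_lt_0_compat; nra|].
  exists N0. intros N HN. specialize (HN0 (S N) ltac:(lia)).
  rewrite Rabs_pos_eq in HN0 by (apply pow_le; lra).
  apply Rmult_lt_compat_l with (r := K + 1) in HN0; [|lra].
  replace ((K + 1) * (e * (1 - mu) / (K + 1))) with (e * (1 - mu)) in HN0 by (field; lra).
  assert (Hpow : 0 <= mu ^ S N) by (apply pow_le; lra).
  apply Rmult_le_reg_r with (1 - mu); [lra|].
  replace (K * mu ^ S N / (1 - mu) * (1 - mu)) with (K * mu ^ S N) by (field; lra).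
  nra.
Qed.

(** * Termwise differentiation *)

Definition deriv_coef (b : nat -> C) (j : nat) : C := (INR (S j) * b (S j))%C.

Lemma deriv_coef_geometric F b rho : taylor_on_disc F b -> 0 < rho < 1 ->
  exists K mu, 0 <= K /\ 0 <= mu < 1 /\
    forall j, cmod (deriv_coef b j) * rho ^ j <= K * mu ^ j.
Proof.
  intros HT Hrho.
  destruct (taylor_coef_geometric F b rho HT ltac:(lra)) as [K [mu [HK [Hmu Hgeom]]]].
  exists (K / rho), mu. split; [apply Rdiv_le_0_compat; lra|]. split; [exact Hmu|].
  intros j. specialize (Hgeom (S j)).
  unfold deriv_coef. rewrite Cmod_mult, Cmod_R, Rabs_pos_eq by apply pos_INR.
  assert (Hj : 1 <= INR (S j) <= INR (S (S j))) by (rewrite !S_INR; pose proof (pos_INR j); lra).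
  assert (Hweight : INR (S j) * cmod (b (S j)) * rho ^ S j
                    <= INR (S (S j)) ^ 2 * cmod (b (S j)) * rho ^ S j).
  { apply Rmult_le_compat_r; [apply pow_le; lra|].
    apply Rmult_le_compat_r; [apply Cmod_ge_0|]. nra. }
  assert (Hdecay : K * mu ^ S j <= K * mu ^ j).
  { apply Rmult_le_compat_l; [lra|]. simpl. assert (0 <= mu ^ j) by (apply pow_le; lra). nra. }
  apply Rmult_le_reg_r with rho; [lra|].
  replace (K / rho * mu ^ j * rho) with (K * mu ^ j) by (field; lra).
  replace (INR (S j) * cmod (b (S j)) * rho ^ j * rho)
    with (INR (S j) * cmod (b (S j)) * rho ^ S j) by (simpl; ring).
  lra.
Qed.

Fixpoint dCpow (z : C) (k : nat) : C :=
  match k with O => 0%C | S j => (z * dCpow z j + z ^ j)%C end.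

Lemma dCpow_S z j : dCpow z (S j) = (INR (S j) * z ^ j)%C.
Proof.
  induction j as [|j IH]; [simpl; ring|].
  change (dCpow z (S (S j))) with (z * dCpow z (S j) + z ^ S j)%C.
  rewrite IH, (S_INR (S j)), RtoC_plus. simpl. ring.
Qed.

Lemma Cpow_increment_le z h rho k : cmod z <= rho -> cmod (z + h)%C <= rho ->
  rho * cmod ((z + h) ^ k - z ^ k)%C <= INR k * rho ^ k * cmod h.
Proof.
  intros Hz Hzh. assert (Hrho : 0 <= rho) by (pose proof (Cmod_ge_0 z); lra).
  induction k as [|k IH].
  { replace ((z + h) ^ 0 - z ^ 0)%C with (Complex.RtoC 0) by (simpl; ring).
    rewrite Cmod_0. simpl. lra. }
  set (E := ((z + h) ^ k - z ^ k)%C) in *.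
  replace ((z + h) ^ S k - z ^ S k)%C with ((z + h) * E + h * z ^ k)%C by (unfold E; simpl; ring).
  assert (Htri := Cmod_triangle ((z + h) * E) (h * z ^ k)).
  rewrite !Cmod_mult, Cmod_pow in Htri.
  assert (Hzk : cmod z ^ k <= rho ^ k) by (apply pow_incr; split; [apply Cmod_ge_0 | lra]).
  assert (H1 : cmod (z + h) * (rho * cmod E) <= rho * (INR k * rho ^ k * cmod h))
    by (apply Rmult_le_compat; try apply Rmult_le_pos; auto using Cmod_ge_0).
  assert (H2 : cmod h * cmod z ^ k <= cmod h * rho ^ k)
    by (apply Rmult_le_compat_l; auto using Cmod_ge_0).
  rewrite S_INR. simpl pow. nra.
Qed.

Lemma Cpow_remainder_le z h rho k : cmod z <= rho -> cmod (z + h)%C <= rho ->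
  rho ^ 2 * cmod ((z + h) ^ k - z ^ k - h * dCpow z k)%C <= INR k ^ 2 * rho ^ k * cmod h ^ 2.
Proof.
  intros Hz Hzh. assert (Hrho : 0 <= rho) by (pose proof (Cmod_ge_0 z); lra).
  induction k as [|k IH].
  { replace ((z + h) ^ 0 - z ^ 0 - h * dCpow z 0)%C with (Complex.RtoC 0) by (simpl; ring).
    rewrite Cmod_0. simpl. lra. }
  assert (HE := Cpow_increment_le z h rho k Hz Hzh).
  set (E := ((z + h) ^ k - z ^ k)%C) in *.
  set (D := ((z + h) ^ k - z ^ k - h * dCpow z k)%C) in *.
  replace ((z + h) ^ S k - z ^ S k - h * dCpow z (S k))%C with (z * D + h * E)%C
    by (unfold D, E; simpl; ring).
  assert (Htri := Cmod_triangle (z * D) (h * E)). rewrite !Cmod_mult in Htri.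
  assert (H1 : cmod z * (rho ^ 2 * cmod D) <= rho * (INR k ^ 2 * rho ^ k * cmod h ^ 2))
    by (apply Rmult_le_compat; auto using Cmod_ge_0;
        apply Rmult_le_pos; auto using pow_le, Cmod_ge_0).
  assert (H2 : rho * cmod h * (rho * cmod E) <= rho * cmod h * (INR k * rho ^ k * cmod h))
    by (apply Rmult_le_compat_l; apply Rmult_le_pos || auto; auto using Cmod_ge_0).
  assert (Hk : 0 <= INR k * (rho * rho ^ k) * cmod h ^ 2)
    by (apply Rmult_le_pos; [apply Rmult_le_pos; [apply pos_INR | apply pow_le with (n := S k); lra]
                            | apply pow2_ge_0]).
  assert (0 <= rho * rho ^ k * cmod h ^ 2)
    by (apply Rmult_le_pos; [apply pow_le with (n := S k); lra | apply pow2_ge_0]).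
  assert (0 <= cmod D) by apply Cmod_ge_0. assert (0 <= cmod E) by apply Cmod_ge_0.
  rewrite S_INR. simpl pow in *. nra.
Qed.

Lemma Cpow_remainder_le_div z h rho k : 0 < rho -> cmod z <= rho -> cmod (z + h)%C <= rho ->
  cmod ((z + h) ^ k - z ^ k - h * dCpow z k)%C <= INR k ^ 2 * rho ^ k * (cmod h ^ 2 / rho ^ 2).
Proof.
  intros Hrho Hz Hzh. assert (Hrho2 : 0 < rho ^ 2) by (apply pow_lt, Hrho).
  apply Rmult_le_reg_l with (rho ^ 2); [exact Hrho2|].
  replace (rho ^ 2 * (INR k ^ 2 * rho ^ k * (cmod h ^ 2 / rho ^ 2)))
    with (INR k ^ 2 * rho ^ k * cmod h ^ 2) by (field; lra).
  apply Cpow_remainder_le; assumption.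
Qed.

Lemma has_Cderiv_monomial (c : C) k z : has_Cderiv (fun w => c * w ^ k)%C z (c * dCpow z k)%C.
Proof.
  apply has_Cderiv_C. intros eps Heps.
  assert (Hz := Cmod_ge_0 z). set (rho := cmod z + 1).
  assert (Hrho : 0 < rho) by (unfold rho; lra).
  set (A := cmod c * (INR k ^ 2 * rho ^ k) / rho ^ 2).
  assert (HA : 0 <= A).
  { unfold A. apply Rdiv_le_0_compat; [|apply pow_lt, Hrho].
    apply Rmult_le_pos; [apply Cmod_ge_0|].
    apply Rmult_le_pos; [apply pow2_ge_0 | apply pow_le; lra]. }
  exists (Rmin 1 (eps / (A + 1))). split; [apply Rmin_pos; [lra | apply Rdiv_lt_0_compat; lra]|].
  intros h [Hh0 Hh].
  assert (Hh1 : cmod h < 1) by (eapply Rlt_le_trans; [exact Hh | apply Rmin_l]).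
  assert (Hheps : cmod h * (A + 1) <= eps).
  { apply Rmult_le_reg_r with (/ (A + 1)); [apply Rinv_0_lt_compat; lra|].
    replace (cmod h * (A + 1) * / (A + 1)) with (cmod h) by (field; lra).
    apply Rlt_le. eapply Rlt_le_trans; [exact Hh | apply Rmin_r]. }
  assert (Hzh : cmod (z + h)%C <= rho)
    by (eapply Rle_trans; [apply Cmod_triangle | unfold rho; lra]).
  assert (HR := Cpow_remainder_le_div z h rho k Hrho ltac:(unfold rho; lra) Hzh).
  replace (c * (z + h) ^ k - c * z ^ k - c * dCpow z k * h)%C
    with (c * ((z + h) ^ k - z ^ k - h * dCpow z k))%C by ring.
  rewrite Cmod_mult.
  apply Rle_trans with (A * cmod h ^ 2).
  - replace (A * cmod h ^ 2) with (cmod c * (INR k ^ 2 * rho ^ k * (cmod h ^ 2 / rho ^ 2)))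
      by (unfold A; field; lra).
    apply Rmult_le_compat_l; [apply Cmod_ge_0 | exact HR].
  - simpl pow. nra.
Qed.

Lemma csum_remainder_le (b : nat -> C) z h rho N :
  0 < rho -> cmod z <= rho -> cmod (z + h)%C <= rho ->
  cmod (csum (fun k => b k * (z + h) ^ k) N - csum (fun k => b k * z ^ k) N
        - h * csum (fun k => b k * dCpow z k) N)%C
  <= sum_f_R0 (fun k => INR k ^ 2 * cmod (b k) * rho ^ k) N * (cmod h ^ 2 / rho ^ 2).
Proof.
  intros Hrho Hz Hzh.
  replace (csum (fun k => b k * (z + h) ^ k) N - csum (fun k => b k * z ^ k) N
           - h * csum (fun k => b k * dCpow z k) N)%C
    with (csum (fun k => b k * ((z + h) ^ k - z ^ k - h * dCpow z k)) N)%C.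
  2:{ rewrite <- csum_minus, <- csum_mult_l, <- csum_minus. apply csum_ext. intros; ring. }
  eapply Rle_trans; [apply Cmod_csum_le|].
  rewrite (Rmult_comm (sum_f_R0 _ N)), scal_sum. apply sum_Rle. intros k _. rewrite Cmod_mult.
  replace (INR k ^ 2 * cmod (b k) * rho ^ k * (cmod h ^ 2 / rho ^ 2))
    with (cmod (b k) * (INR k ^ 2 * rho ^ k * (cmod h ^ 2 / rho ^ 2))) by ring.
  apply Rmult_le_compat_l; [apply Cmod_ge_0 | apply Cpow_remainder_le_div; assumption].
Qed.

Lemma csum_deriv_coef b z N :
  csum (fun j => deriv_coef b j * z ^ j)%C N = csum (fun k => b k * dCpow z k)%C (S N).
Proof.
  rewrite csum_shift. replace (b O * dCpow z 0)%C with (Complex.RtoC 0) by (simpl; ring).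
  rewrite Cplus_0_l. apply csum_ext. intros k _. rewrite dCpow_S. unfold deriv_coef. ring.
Qed.

(* [h (q - d) = (P1 - F1) - (P0 - F0) + (F1 - F0 - d h) - (P1 - P0 - h q)]. *)
Lemma Cmod_difference_quotient_lt (h q d P1 P0 F1 F0 : C) e :
  cmod (P1 - F1)%C < e -> cmod (P0 - F0)%C < e ->
  cmod (F1 - F0 - d * h)%C <= e -> cmod (P1 - P0 - h * q)%C <= e ->
  cmod h * cmod (q - d)%C < 4 * e.
Proof.
  intros H1 H0 HF HP. rewrite <- Cmod_mult.
  replace (h * (q - d))%C with ((P1 - F1) - (P0 - F0) + (F1 - F0 - d * h) - (P1 - P0 - h * q))%C
    by ring.
  pose proof (Cmod_minus_le (P1 - F1) (P0 - F0)).
  pose proof (Cmod_triangle ((P1 - F1) - (P0 - F0)) (F1 - F0 - d * h)).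
  pose proof (Cmod_minus_le ((P1 - F1) - (P0 - F0) + (F1 - F0 - d * h)) (P1 - P0 - h * q)).
  lra.
Qed.

(* Take [h] real, small compared with the differentiability radius of [F] at [z] and with the
   second-order remainder of the series. *)
Lemma taylor_deriv_cv F b z d : taylor_on_disc F b -> in_disc z -> has_Cderiv F z d ->
  Ccv (Cpsum (deriv_coef b) z) d.
Proof.
  intros HT Hz HD. change (cmod z < 1) in Hz. apply Ccv_Cpsum_C. intros eps Heps.
  assert (Hz0 := Cmod_ge_0 z). set (rho := (1 + cmod z) / 2).
  assert (Hrho : cmod z < rho < 1) by (unfold rho; lra).
  assert (Hrho2 : 0 < rho ^ 2) by (apply pow_lt; lra).
  destruct (taylor_weighted_sum_bounded F b rho HT) as [B [HB0 HB]]; [lra|].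
  destruct (proj1 (has_Cderiv_C F z d) HD (eps / 4) ltac:(lra)) as [delta [Hdelta Hdiff]].
  set (eta := Rmin (delta / 2) (Rmin (rho - cmod z) (eps * rho ^ 2 / (4 * B)))).
  assert (Heta : 0 < eta /\ eta < delta /\ eta <= rho - cmod z /\ eta <= eps * rho ^ 2 / (4 * B)).
  { unfold eta, Rmin. repeat destruct Rle_dec; repeat split;
      try apply Rdiv_lt_0_compat; try nra. }
  set (h := Complex.RtoC eta).
  assert (Hh : cmod h = eta) by (unfold h; rewrite Cmod_R, Rabs_pos_eq; lra).
  assert (Hzh : cmod (z + h)%C <= rho) by (eapply Rle_trans; [apply Cmod_triangle | lra]).
  assert (Hdiff_h : cmod (F (z + h) - F z - d * h)%C <= eps * eta / 4).
  { replace (eps * eta / 4) with (eps / 4 * cmod h) by (rewrite Hh; field). apply Hdiff. lra. }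
  assert (Hrem_small : B * (eta ^ 2 / rho ^ 2) <= eps * eta / 4).
  { assert (HBeta : 4 * B * eta <= eps * rho ^ 2).
    { replace (eps * rho ^ 2) with (4 * B * (eps * rho ^ 2 / (4 * B))) by (field; lra).
      apply Rmult_le_compat_l; lra. }
    replace (B * (eta ^ 2 / rho ^ 2)) with (4 * B * eta * (eta / (4 * rho ^ 2))) by (field; lra).
    replace (eps * eta / 4) with (eps * rho ^ 2 * (eta / (4 * rho ^ 2))) by (field; lra).
    apply Rmult_le_compat_r; [apply Rdiv_le_0_compat|]; lra. }
  destruct (taylor_on_disc_csum F b (z + h) HT ltac:(lra) (eps * eta / 4)) as [N1 HN1]; [nra|].
  destruct (taylor_on_disc_csum F b z HT Hz (eps * eta / 4)) as [N0 HN0]; [nra|].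
  exists (Nat.max N1 N0). intros N HN. rewrite csum_deriv_coef.
  assert (Hrem : cmod (csum (fun k => b k * (z + h) ^ k) (S N) - csum (fun k => b k * z ^ k) (S N)
                       - h * csum (fun k => b k * dCpow z k) (S N))%C <= eps * eta / 4).
  { eapply Rle_trans; [apply (csum_remainder_le b z h rho); lra|]. rewrite Hh.
    eapply Rle_trans; [|exact Hrem_small].
    apply Rmult_le_compat_r; [apply Rdiv_le_0_compat; nra | apply HB]. }
  assert (Hq := Cmod_difference_quotient_lt h _ d _ _ _ _ _
                  (HN1 (S N) ltac:(lia)) (HN0 (S N) ltac:(lia)) Hdiff_h Hrem).
  rewrite Hh in Hq. apply Rmult_lt_reg_l with eta; lra.
Qed.

(** * Cauchy's inequality on a circle *)

Definition cis (a : R) : C := (cos a, sin a).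

Lemma cis_add a b : (cis a * cis b)%C = cis (a + b).
Proof. apply C_ext; simpl; [rewrite cos_plus | rewrite sin_plus]; ring. Qed.

Lemma cis_pow a k : (cis a ^ k)%C = cis (INR k * a).
Proof.
  induction k as [|k IH].
  - apply C_ext; simpl; [rewrite Rmult_0_l, cos_0 | rewrite Rmult_0_l, sin_0]; reflexivity.
  - simpl Complex.Cpow. rewrite IH, cis_add, S_INR. f_equal. ring.
Qed.

Lemma Cconj_cis a : Cconj (cis a) = cis (- a).
Proof. apply C_ext; simpl; [rewrite cos_neg | rewrite sin_neg]; reflexivity. Qed.

Lemma Cmod_cis a : cmod (cis a) = 1.
Proof.
  unfold Complex.Cmod, cis. cbn [fst snd].
  replace (cos a ^ 2 + sin a ^ 2) with 1 by (rewrite <- (sin2_cos2 a); unfold Rsqr; ring).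
  apply sqrt_1.
Qed.

Lemma cis_ne_1 a : 0 < Rabs a < 2 * PI -> cis a <> 1%C.
Proof.
  intros Ha Hcis.
  assert (Hsin : sin (Rabs a) = 0).
  { apply (f_equal snd) in Hcis. simpl in Hcis.
    destruct (Rcase_abs a); [rewrite Rabs_left, sin_neg | rewrite Rabs_right]; lra. }
  assert (Hcos : cos (Rabs a) = 1).
  { apply (f_equal fst) in Hcis. simpl in Hcis.
    destruct (Rcase_abs a); [rewrite Rabs_left, cos_neg | rewrite Rabs_right]; lra. }
  destruct (sin_eq_O_2PI_0 (Rabs a)) as [H | [H | H]]; try lra.
  rewrite H, cos_PI in Hcos. lra.
Qed.

Lemma cis_neg_2PI_mult k : cis (- (2 * INR k * PI)) = 1%C.
Proof.
  apply C_ext; simpl; [rewrite cos_neg | rewrite sin_neg].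
  - rewrite <- (Rplus_0_l (2 * INR k * PI)), cos_period. apply cos_0.
  - rewrite <- (Rplus_0_l (2 * INR k * PI)), sin_period, sin_0. ring.
Qed.

Lemma Cmult_geom_csum (u : C) N : ((u - 1) * csum (fun m => u ^ m) N)%C = (u ^ S N - 1)%C.
Proof.
  induction N as [|N IH]; [simpl; ring|].
  rewrite csum_S, Cmult_plus_distr_l, IH. simpl. ring.
Qed.

Lemma csum_pow_root_of_unity (u : C) N :
  (u ^ S N)%C = 1%C -> u <> 1%C -> csum (fun m => u ^ m)%C N = Complex.RtoC 0.
Proof.
  intros Hroot Hu. assert (Hgeom := Cmult_geom_csum u N).
  rewrite Hroot, Cminus_diag in Hgeom.
  assert (Hu1 : (u - 1)%C <> Complex.RtoC 0) by (intros H; apply Hu, Ceq_minus, H).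
  replace (csum (fun m => u ^ m)%C N) with (/ (u - 1) * ((u - 1) * csum (fun m => u ^ m)%C N))%C
    by (field; exact Hu1).
  rewrite Hgeom. ring.
Qed.

Definition node (rho : R) (N m : nat) : C := (rho * cis (INR m * (2 * PI / INR (S N))))%C.

Lemma Cmod_node rho N m : 0 <= rho -> cmod (node rho N m) = rho.
Proof. intros. unfold node. rewrite Cmod_mult, Cmod_R, Cmod_cis, Rabs_pos_eq; lra. Qed.

Lemma node_pow_conj rho N m j L :
  (node rho N m ^ j * Cconj (node rho N m ^ L))%C
  = (rho ^ j * rho ^ L * cis ((INR j - INR L) * (2 * PI / INR (S N))) ^ m)%C.
Proof.
  unfold node. rewrite !Cpow_mult_l, !Cpow_RtoC, Cmult_conj, !cis_pow, Cconj_cis, Cconj_RtoC.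
  set (th := 2 * PI / INR (S N)).
  replace (INR m * ((INR j - INR L) * th)) with (INR j * (INR m * th) + - (INR L * (INR m * th)))
    by ring.
  rewrite <- cis_add. ring.
Qed.

Lemma node_orthogonal rho N j L : (j < L)%nat -> (L <= N)%nat ->
  csum (fun m => node rho N m ^ j * Cconj (node rho N m ^ L))%C N = Complex.RtoC 0.
Proof.
  intros HjL HLN. set (u := cis ((INR j - INR L) * (2 * PI / INR (S N)))).
  rewrite (csum_ext _ (fun m => rho ^ j * rho ^ L * u ^ m)%C) by (intros; apply node_pow_conj).
  assert (HN : 0 < INR (S N)) by apply lt_0_INR, Nat.lt_0_succ.
  assert (HLj : INR L - INR j = INR (L - j)) by (rewrite minus_INR; lia || reflexivity).
  assert (HLj1 : 1 <= INR (L - j) < INR (S N)) by (split; [apply (le_INR 1) | apply lt_INR]; lia).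
  assert (HPI := PI_RGT_0).
  rewrite csum_mult_l, csum_pow_root_of_unity; [ring | |].
  - unfold u. rewrite cis_pow.
    replace (INR (S N) * ((INR j - INR L) * (2 * PI / INR (S N)))) with (- (2 * INR (L - j) * PI))
      by (rewrite <- HLj; field; lra).
    apply cis_neg_2PI_mult.
  - apply cis_ne_1.
    rewrite Rabs_left1, Ropp_mult_distr_l, Ropp_minus_distr, HLj.
    2:{ apply Rmult_le_0_r; [rewrite <- (Ropp_minus_distr (INR L)), HLj; lra |].
        apply Rdiv_le_0_compat; lra. }
    split; [apply Rmult_lt_0_compat; [lra | apply Rdiv_lt_0_compat; lra]|].
    replace (INR (L - j) * (2 * PI / INR (S N))) with (2 * PI * (INR (L - j) / INR (S N)))
      by (field; lra).
    rewrite <- (Rmult_1_r (2 * PI)) at 2. apply Rmult_lt_compat_l; [lra|].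
    apply Rmult_lt_reg_r with (INR (S N)); [lra|]. field_simplify; lra.
Qed.

Lemma node_poly_orthogonal (c : nat -> C) rho N K L : (K < L)%nat -> (L <= N)%nat ->
  csum (fun m => csum (fun j => c j * node rho N m ^ j) K * Cconj (node rho N m ^ L))%C N
  = Complex.RtoC 0.
Proof.
  intros HKL HLN. induction K as [|K IH].
  - rewrite (csum_ext _ (fun m => c O * (node rho N m ^ 0 * Cconj (node rho N m ^ L)))%C)
      by (intros; simpl; ring).
    rewrite csum_mult_l, node_orthogonal by lia. ring.
  - rewrite (csum_ext _ (fun m => csum (fun j => c j * node rho N m ^ j) K
                                    * Cconj (node rho N m ^ L)
                                  + c (S K) * (node rho N m ^ S K * Cconj (node rho N m ^ L)))%C)
      by (intros; rewrite csum_S; ring).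
    rewrite csum_plus, csum_mult_l, IH, node_orthogonal by lia. ring.
Qed.

Lemma Cmod_add_sq (x y : C) :
  cmod (x + y)%C ^ 2 = cmod x ^ 2 + cmod y ^ 2 + 2 * fst (x * Cconj y)%C.
Proof. rewrite !Cmod2_alt. destruct x, y. unfold Cconj, Re, Im. simpl. ring. Qed.

Lemma sum_f_R0_mult_fst a (g : nat -> C) N :
  sum_f_R0 (fun m => a * fst (g m)) N = a * fst (csum g N).
Proof. induction N as [|N IH]; simpl; [|rewrite IH]; ring. Qed.

Lemma parseval_nodes (c : nat -> C) rho N K : 0 <= rho -> (K <= N)%nat ->
  sum_f_R0 (fun m => cmod (csum (fun j => c j * node rho N m ^ j)%C K) ^ 2) N
  = INR (S N) * sum_f_R0 (fun j => cmod (c j) ^ 2 * rho ^ (2 * j)) K.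
Proof.
  intros Hrho HKN. induction K as [|K IH].
  - rewrite (sum_eq _ (fun _ => cmod (c O) ^ 2 * rho ^ (2 * 0))), sum_cte; [simpl; ring|].
    intros m _. simpl. rewrite Cmult_1_r. ring.
  - set (P m := csum (fun j => c j * node rho N m ^ j)%C K).
    rewrite (sum_eq _ (fun m => cmod (P m) ^ 2 + cmod (c (S K)) ^ 2 * rho ^ (2 * S K)
                               + 2 * fst (Cconj (c (S K)) * (P m * Cconj (node rho N m ^ S K)))%C)).
    2:{ intros m _. rewrite csum_S, Cmod_add_sq, Cmod_mult, Cmod_pow, Cmod_node, Cmult_conj
          by exact Hrho.
        rewrite Rpow_mult_distr, <- pow_mult, (Nat.mul_comm (S K) 2).
        unfold P. f_equal. do 2 f_equal. ring. }
    unfold P. rewrite !sum_plus, sum_cte, IH by lia.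
    rewrite sum_f_R0_mult_fst, csum_mult_l, node_poly_orthogonal by lia.
    rewrite tech5. simpl fst. ring.
Qed.

Lemma Rle_sq_of_le_sq_add x M : 0 <= M -> (forall e, 0 < e -> x <= (M + e) ^ 2) -> x <= M ^ 2.
Proof.
  intros HM Hx. apply Rle_plus_epsilon. intros eps Heps.
  set (e := Rmin 1 (eps / (2 * M + 1))).
  assert (He : 0 < e <= 1 /\ e * (2 * M + 1) <= eps).
  { unfold e, Rmin. destruct Rle_dec as [H|H].
    - split; [lra|]. apply Rmult_le_reg_r with (/ (2 * M + 1)); [apply Rinv_0_lt_compat; lra|].
      replace (1 * (2 * M + 1) * / (2 * M + 1)) with 1 by (field; lra). exact H.
    - split; [split; [apply Rdiv_lt_0_compat|]; lra|]. right. field. lra. }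
  specialize (Hx e ltac:(lra)). nra.
Qed.

(* Cauchy's inequality in mean-square form: by Parseval at [N' + 1] nodes the sum is the
   average of [|P_N'|^2] over the nodes, and the uniform tail bound makes [P_N'] close to [G]. *)
Lemma coef_sq_sum_le a G rho K mu M : 0 <= rho -> 0 <= K -> 0 <= mu < 1 ->
  (forall j, cmod (a j) * rho ^ j <= K * mu ^ j) ->
  (forall z, cmod z = rho -> Ccv (Cpsum a z) (G z) /\ cmod (G z) <= M) ->
  forall N, sum_f_R0 (fun j => cmod (a j) ^ 2 * rho ^ (2 * j)) N <= M ^ 2.
Proof.
  intros Hrho HK Hmu Hgeom HG N.
  assert (HM : 0 <= M).
  { destruct (HG (Complex.RtoC rho)) as [_ HGrho]; [rewrite Cmod_R, Rabs_pos_eq; lra|].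
    pose proof (Cmod_ge_0 (G (Complex.RtoC rho))). lra. }
  apply Rle_sq_of_le_sq_add; [exact HM|]. intros e He.
  destruct (geom_tail_small K mu e HK Hmu He) as [N0 HN0].
  set (N' := Nat.max N N0). specialize (HN0 N' ltac:(lia)).
  assert (Hnode : forall m, cmod (csum (fun j => a j * node rho N' m ^ j)%C N') ^ 2 <= (M + e) ^ 2).
  { intros m. set (z := node rho N' m).
    assert (Hz : cmod z = rho) by apply Cmod_node, Hrho.
    destruct (HG z Hz) as [Hcv HGz].
    assert (Htail := Ccv_tail_le a z (G z) rho K mu N' HK Hmu ltac:(lra) Hgeom Hcv).
    apply pow_incr. split; [apply Cmod_ge_0|].
    replace (csum (fun j => a j * z ^ j)%C N') with (G z - (G z - csum (fun j => a j * z ^ j) N'))%C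
      by ring.
    eapply Rle_trans; [apply Cmod_minus_le | lra]. }
  assert (HN' : 0 < INR (S N')) by apply lt_0_INR, Nat.lt_0_succ.
  apply Rle_trans with (sum_f_R0 (fun j => cmod (a j) ^ 2 * rho ^ (2 * j)) N').
  { apply sum_f_R0_le_mono; [|lia]. intros j.
    apply Rmult_le_pos; [apply pow2_ge_0 | apply pow_le, Hrho]. }
  apply Rmult_le_reg_l with (INR (S N')); [exact HN'|].
  rewrite <- (parseval_nodes a rho N' N' Hrho (le_n _)), Rmult_comm, <- sum_cte.
  apply sum_Rle. intros m _. apply Hnode.
Qed.

(* The coefficients of the zero function [F - F] satisfy Cauchy's inequality with [M = 0]. *)
Lemma taylor_coef_unique F b c : taylor_on_disc F b -> taylor_on_disc F c -> forall k, b k = c k.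
Proof.
  intros Hb Hc k. set (d j := (b j - c j)%C).
  assert (Hd := taylor_on_disc_sub F F b c Hb Hc). fold d in Hd.
  destruct (taylor_coef_geometric _ d (1 / 2) Hd) as [K [mu [HK [Hmu Hgeom]]]]; [lra|].
  assert (Hsum : sum_f_R0 (fun j => cmod (d j) ^ 2 * (1 / 2) ^ (2 * j)) k <= 0 ^ 2).
  { apply (coef_sq_sum_le d (fun z => F z - F z)%C (1 / 2) K mu 0);
      [lra | exact HK | exact Hmu | |].
    - intros j. eapply Rle_trans; [|apply Hgeom].
      apply Rmult_le_compat_r; [apply pow_le; lra|].
      rewrite <- (Rmult_1_l (cmod (d j))) at 1.
      apply Rmult_le_compat_r; [apply Cmod_ge_0|].
      rewrite <- (pow1 2). apply pow_incr. split; [lra|].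
      rewrite S_INR. pose proof (pos_INR j). lra.
    - intros z Hz. split; [apply Hd; change (cmod z < 1); lra|].
      rewrite Cminus_diag, Cmod_0. lra. }
  assert (Hdk : cmod (d k) ^ 2 * (1 / 2) ^ (2 * k) <= 0).
  { rewrite pow_i in Hsum by lia. eapply Rle_trans; [|exact Hsum].
    apply (sum_f_R0_term_le (fun j => cmod (d j) ^ 2 * (1 / 2) ^ (2 * j)) k k); [|lia].
    intros j. apply Rmult_le_pos; [apply pow2_ge_0 | apply pow_le; lra]. }
  assert (Hpow : 0 < (1 / 2) ^ (2 * k)) by (apply pow_lt; lra).
  apply Ceq_minus, Cmod_eq_0.
  destruct (Rle_lt_or_eq_dec 0 (cmod (d k)) (Cmod_ge_0 _)) as [Hpos | Heq];
    [exfalso; assert (0 < cmod (d k) ^ 2) by (apply pow_lt, Hpos); nra | symmetry; exact Heq].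
Qed.

(** * The tail estimate *)

Lemma deriv_coef_sq_sum_le F b rho : in_Bloch_B F -> taylor_on_disc F b -> 0 < rho < 1 ->
  forall N, sum_f_R0 (fun j => cmod (deriv_coef b j) ^ 2 * rho ^ (2 * j)) N
            <= (1 / (1 - rho ^ 2)) ^ 2.
Proof.
  intros [F' HB] HT Hrho.
  destruct (deriv_coef_geometric F b rho HT Hrho) as [K [mu [HK [Hmu Hgeom]]]].
  apply (coef_sq_sum_le _ F' rho K mu); [lra | exact HK | exact Hmu | exact Hgeom |].
  intros z Hz. assert (Hdisc : in_disc z) by (change (cmod z < 1); lra).
  destruct (HB z Hdisc) as [HD HF']. split.
  - exact (taylor_deriv_cv F b z (F' z) HT Hdisc HD).
  - change (cmod (F' z) <= 1 / (1 - cmod z ^ 2)) in HF'. now rewrite Hz in HF'.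
Qed.

Lemma pow_scale_le t s A n i : 0 <= t <= s -> 0 < s -> 0 <= A ->
  A * t ^ (n + i) <= (t / s) ^ n * (A * s ^ (n + i)).
Proof.
  intros Hts Hs HA. rewrite !pow_add.
  replace ((t / s) ^ n * (A * (s ^ n * s ^ i))) with (A * t ^ n * s ^ i).
  2:{ unfold Rdiv. rewrite Rpow_mult_distr, pow_inv. field. apply pow_nonzero. lra. }
  rewrite <- Rmult_assoc. apply Rmult_le_compat_l.
  - apply Rmult_le_pos; [exact HA | apply pow_le; lra].
  - apply pow_incr. exact Hts.
Qed.

(* The [k]-th tail term is [|a_(k-1)|^2 r^(2(k-1))] with [a = deriv_coef b]. *)
Lemma tail_sum_le_scaled b n r rho m : 0 <= r <= rho -> 0 < rho ->
  tail_sum b n r m <= (r ^ 2 / rho ^ 2) ^ n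
    * sum_f_R0 (fun j => cmod (deriv_coef b j) ^ 2 * rho ^ (2 * j)) (n + m).
Proof.
  intros Hr Hrho. set (g j := cmod (deriv_coef b j) ^ 2 * rho ^ (2 * j)).
  assert (Hg : forall j, 0 <= g j)
    by (intros; apply Rmult_le_pos; [apply pow2_ge_0 | apply pow_le; lra]).
  apply Rle_trans with ((r ^ 2 / rho ^ 2) ^ n * sum_f_R0 (fun i => g (n + i)%nat) m).
  2:{ apply Rmult_le_compat_l; [apply pow_le, Rdiv_le_0_compat; nra|].
      apply sum_f_R0_shift_le, Hg. }
  unfold tail_sum. rewrite scal_sum. apply sum_Rle. intros i _.
  unfold g, deriv_coef. rewrite Cmod_mult, Cmod_R, Rabs_pos_eq, Cmod_C by apply pos_INR.
  replace (S (n + i)) with (n + 1 + i)%nat by lia.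
  replace (2 * (n + 1 + i) - 2)%nat with (2 * (n + i))%nat by lia.
  rewrite !pow_mult, Rpow_mult_distr, (Rmult_comm (_ * (rho ^ 2) ^ (n + i))).
  apply pow_scale_le; [split; [apply pow2_ge_0 | apply pow_incr; lra] | nra |].
  apply Rmult_le_pos; apply pow2_ge_0.
Qed.

Lemma Un_cv_const c : Un_cv (fun _ => c) c.
Proof.
  intros eps Heps. exists O. intros. unfold Rdist. rewrite Rminus_diag, Rabs_R0. exact Heps.
Qed.

Lemma growing_bounded_cv u B : Un_growing u -> (forall m, u m <= B) ->
  exists l, Un_cv u l /\ l <= B.
Proof.
  intros Hu HB. destruct (growing_cv u Hu) as [l Hl].
  { exists B. intros x [m ->]. apply HB. }
  exists l. split; [exact Hl | exact (Rle_cv_lim HB Hl (Un_cv_const B))].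
Qed.

Lemma tail_sum_growing b n r : Un_growing (tail_sum b n r).
Proof.
  intros m. unfold tail_sum. rewrite tech5.
  assert (0 <= INR (n + 1 + S m) ^ 2 * Cmod (b (n + 1 + S m)%nat) ^ 2
               * r ^ (2 * (n + 1 + S m) - 2))
    by (apply Rmult_le_pos; [apply Rmult_le_pos; apply pow2_ge_0 |];
        replace (2 * (n + 1 + S m) - 2)%nat with (2 * (n + S m))%nat by lia;
        rewrite pow_mult; apply pow_le, pow2_ge_0).
  lra.
Qed.

Lemma INR_add_2 n : INR (n + 2) = INR n + 2.
Proof. rewrite plus_INR. simpl. ring. Qed.

Lemma sharp_bound_scaled n r : (1 <= n)%nat ->
  sharp_bound n r = (r ^ 2 / (INR n / INR (n + 2))) ^ n * (1 / (1 - INR n / INR (n + 2))) ^ 2.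
Proof.
  intros Hn. assert (Hn1 : 1 <= INR n) by (apply (le_INR 1); exact Hn).
  unfold sharp_bound. rewrite INR_add_2, pow_add, pow_mult.
  unfold Rdiv. rewrite !Rpow_mult_distr, !pow_inv, Rpow_mult_distr, pow_inv.
  field. repeat split; try apply pow_nonzero; lra.
Qed.

Lemma tail_sum_le_sharp_bound F b n r : (1 <= n)%nat -> in_Bloch_B F -> taylor_on_disc F b ->
  0 <= r <= sqrt (INR n / INR (n + 2)) -> forall m, tail_sum b n r m <= sharp_bound n r.
Proof.
  intros Hn HB HT Hr m.
  assert (Hn1 : 1 <= INR n) by (apply (le_INR 1); exact Hn).
  set (t := INR n / INR (n + 2)) in *.
  assert (Ht : 0 < t < 1).
  { unfold t. rewrite INR_add_2. split; [apply Rdiv_lt_0_compat; lra|].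
    apply Rmult_lt_reg_r with (INR n + 2); [lra|]. field_simplify; lra. }
  set (rho := sqrt t) in *.
  assert (Hrho2 : rho ^ 2 = t) by (apply pow2_sqrt; lra).
  assert (Hrho : 0 < rho < 1).
  { split; [apply sqrt_lt_R0; lra|]. rewrite <- sqrt_1. apply sqrt_lt_1; lra. }
  rewrite sharp_bound_scaled by exact Hn. fold t. rewrite <- Hrho2.
  eapply Rle_trans; [apply (tail_sum_le_scaled b n r rho m); lra|].
  apply Rmult_le_compat_l; [apply pow_le, Rdiv_le_0_compat; nra|].
  apply (deriv_coef_sq_sum_le F); [exact HB | exact HT | exact Hrho].
Qed.

(** * The extremal function *)

Lemma pow_le_exp u n : 0 <= u -> u ^ n <= exp (INR n * (u - 1)).
Proof.
  intros Hu. induction n as [|n IH].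
  - simpl. rewrite Rmult_0_l, exp_0. lra.
  - rewrite S_INR, Rmult_plus_distr_r, Rmult_1_l, exp_plus. simpl pow.
    rewrite Rmult_comm. apply Rmult_le_compat; [apply pow_le; lra | lra | exact IH |].
    pose proof (exp_ineq1_le (u - 1)). lra.
Qed.

(* Weighted AM-GM, from [x <= exp (x - 1)]. *)
Lemma pow_mult_sq_le_1 n u v : 0 <= u -> 0 <= v -> INR n * u + 2 * v = INR n + 2 ->
  u ^ n * v ^ 2 <= 1.
Proof.
  intros Hu Hv Huv.
  apply Rle_trans with (exp (INR n * (u - 1)) * exp (INR 2 * (v - 1))).
  - apply Rmult_le_compat; try apply pow_le; auto using pow_le_exp.
  - rewrite <- exp_plus. replace (INR n * (u - 1) + INR 2 * (v - 1)) with 0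
      by (simpl; lra). rewrite exp_0. lra.
Qed.

Lemma cst_pos n : (1 <= n)%nat -> 0 < cst n.
Proof.
  intros Hn. unfold cst, Rpower. apply Rmult_lt_0_compat; [|apply exp_pos].
  rewrite INR_add_2. pose proof (pos_INR n). lra.
Qed.

Lemma cst_sq n : (1 <= n)%nat -> cst n ^ 2 = ((INR n + 2) / 2) ^ 2 * ((INR n + 2) / INR n) ^ n.
Proof.
  intros Hn. assert (Hn1 : 1 <= INR n) by (apply (le_INR 1); exact Hn).
  unfold cst. rewrite INR_add_2, Rpow_mult_distr. f_equal.
  simpl pow. rewrite Rmult_1_r, <- Rpower_plus.
  replace (INR n / 2 + INR n / 2) with (INR n) by field.
  apply Rpower_pow, Rdiv_lt_0_compat; lra.
Qed.

(* [cst n * x^n (1 - x^2)] is maximal, equal to 1, at [x^2 = n / (n + 2)]. *)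
Lemma cst_pow_le n x : (1 <= n)%nat -> 0 <= x < 1 -> cst n * x ^ n <= 1 / (1 - x ^ 2).
Proof.
  intros Hn Hx. assert (Hn1 : 1 <= INR n) by (apply (le_INR 1); exact Hn).
  assert (Hc := cst_pos n Hn). assert (Hx2 : 0 <= x ^ 2 < 1) by (split; nra).
  set (u := (INR n + 2) * x ^ 2 / INR n). set (v := (INR n + 2) * (1 - x ^ 2) / 2).
  assert (Huv : (cst n * x ^ n * (1 - x ^ 2)) ^ 2 = u ^ n * v ^ 2).
  { rewrite !Rpow_mult_distr, cst_sq by exact Hn.
    rewrite <- pow_mult, Nat.mul_comm, pow_mult. unfold u, v, Rdiv.
    rewrite !Rpow_mult_distr, !pow_inv. field. apply pow_nonzero. lra. }
  assert (Hle1 : u ^ n * v ^ 2 <= 1).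
  { apply pow_mult_sq_le_1; unfold u, v; [apply Rdiv_le_0_compat | | field]; nra. }
  assert (Hy : 0 <= cst n * x ^ n * (1 - x ^ 2))
    by (apply Rmult_le_pos; [apply Rmult_le_pos; [lra | apply pow_le; lra] | lra]).
  apply Rmult_le_reg_r with (1 - x ^ 2); [lra|].
  replace (1 / (1 - x ^ 2) * (1 - x ^ 2)) with 1 by (field; lra). nra.
Qed.

Definition extremal (n : nat) (z : C) : C := (Complex.RtoC (cst n / INR (S n)) * z ^ S n)%C.

Definition extremal_coef (n k : nat) : C :=
  if Nat.eqb k (S n) then Complex.RtoC (cst n / INR (S n)) else Complex.RtoC 0.

Lemma extremal_deriv n z : has_Cderiv (extremal n) z (Cmult (RtoC (cst n)) (Cpow z n)).
Proof.
  rewrite Cmult_C, RtoC_C, Cpow_C.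
  replace (Complex.RtoC (cst n) * z ^ n)%C
    with (Complex.RtoC (cst n / INR (S n)) * dCpow z (S n))%C.
  - apply has_Cderiv_monomial.
  - assert (0 < INR (S n)) by apply lt_0_INR, Nat.lt_0_succ.
    rewrite dCpow_S, Cmult_assoc, <- RtoC_mult. do 2 f_equal. field. lra.
Qed.

Lemma extremal_in_Bloch n : (1 <= n)%nat -> in_Bloch_B (extremal n).
Proof.
  intros Hn. exists (fun z => Cmult (RtoC (cst n)) (Cpow z n)). intros z Hz.
  split; [apply extremal_deriv|].
  rewrite Cpow_C. change (cmod (cst n * z ^ n)%C <= 1 / (1 - cmod z ^ 2)).
  rewrite Cmod_mult, Cmod_R, Cmod_pow, Rabs_pos_eq by (apply Rlt_le, cst_pos, Hn).
  apply cst_pow_le; [exact Hn | split; [apply Cmod_ge_0 | exact Hz]].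
Qed.

Lemma extremal_0 n : extremal n (RtoC 0) = RtoC 0.
Proof. unfold extremal. change (RtoC 0) with (Complex.RtoC 0). simpl. ring. Qed.

Lemma csum_extremal_coef n z N :
  csum (fun k => extremal_coef n k * z ^ k)%C N
  = if Nat.ltb N (S n) then Complex.RtoC 0 else extremal n z.
Proof.
  induction N as [|N IH]; [simpl; unfold extremal_coef; simpl; ring|].
  rewrite csum_S, IH. unfold extremal_coef.
  destruct (Nat.ltb_spec N (S n)), (Nat.eqb_spec (S N) (S n)), (Nat.ltb_spec (S N) (S n));
    try lia; unfold extremal; try ring.
  injection e as ->. ring.
Qed.

Lemma extremal_taylor n : taylor_on_disc (extremal n) (extremal_coef n).
Proof.
  intros z Hz. apply Ccv_Cpsum_C. intros eps Heps. exists (S n). intros m Hm.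
  rewrite csum_extremal_coef. destruct (Nat.ltb_spec m (S n)); [lia|].
  rewrite Cminus_diag, Cmod_0. exact Heps.
Qed.

Lemma sharp_bound_cst n r : (1 <= n)%nat -> sharp_bound n r = cst n ^ 2 * r ^ (2 * n).
Proof.
  intros Hn. assert (Hn1 : 1 <= INR n) by (apply (le_INR 1); exact Hn).
  rewrite cst_sq by exact Hn. unfold sharp_bound. rewrite INR_add_2, pow_add.
  unfold Rdiv. rewrite !Rpow_mult_distr, !pow_inv. field. apply pow_nonzero. lra.
Qed.

(* By uniqueness of Taylor coefficients the tail has the single term [k = n + 1]. *)
Lemma extremal_tail_sum n bn r m : (1 <= n)%nat -> taylor_on_disc (extremal n) bn ->
  tail_sum bn n r m = sharp_bound n r.
Proof.
  intros Hn HT.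
  assert (Hbn := taylor_coef_unique _ _ _ HT (extremal_taylor n)).
  assert (HSn : 0 < INR (S n)) by apply lt_0_INR, Nat.lt_0_succ.
  unfold tail_sum. rewrite sum_f_R0_eq_first.
  - rewrite Hbn, Nat.add_0_r, Nat.add_1_r. unfold extremal_coef. rewrite Nat.eqb_refl.
    rewrite Cmod_C, Cmod_R, Rabs_pos_eq
      by (apply Rdiv_le_0_compat; [apply Rlt_le, cst_pos, Hn | lra]).
    replace (2 * S n - 2)%nat with (2 * n)%nat by lia.
    rewrite sharp_bound_cst by exact Hn. field. lra.
  - intros i. rewrite Hbn. unfold extremal_coef.
    replace (Nat.eqb (n + 1 + S i) (S n)) with false by (symmetry; apply Nat.eqb_neq; lia).
    rewrite Cmod_C, Cmod_0. ring.
Qed.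

Theorem proposition1 (n : nat) (Hn : (1 <= n)%nat) :
  (forall (F : Cx -> Cx) (b : nat -> Cx),
     in_Bloch_B F -> taylor_on_disc F b ->
     forall r : R, 0 <= r <= sqrt (INR n / INR (n + 2)) ->
       exists l : R, Un_cv (tail_sum b n r) l /\ l <= sharp_bound n r)
  /\
  (exists Fn : Cx -> Cx,
     in_Bloch_B Fn /\ Fn (RtoC 0) = RtoC 0 /\
     (forall z : Cx, in_disc z -> has_Cderiv Fn z (Cmult (RtoC (cst n)) (Cpow z n))) /\
     (exists bn : nat -> Cx, taylor_on_disc Fn bn) /\
     (forall bn : nat -> Cx, taylor_on_disc Fn bn ->
        forall r : R, 0 <= r <= sqrt (INR n / INR (n + 2)) ->
          Un_cv (tail_sum bn n r) (sharp_bound n r))).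
Proof.
  split.
  - intros F b HB HT r Hr. apply growing_bounded_cv.
    + apply tail_sum_growing.
    + apply (tail_sum_le_sharp_bound F); assumption.
  - exists (extremal n). repeat split.
    + apply extremal_in_Bloch, Hn.
    + apply extremal_0.
    + intros z _. apply extremal_deriv.
    + exists (extremal_coef n). apply extremal_taylor.
    + intros bn HT r _.
      apply (Un_cv_ext (fun _ => sharp_bound n r)); [|apply Un_cv_const].
      intros m. symmetry. apply extremal_tail_sum; assumption.
Qed.
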